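(* Let $0<\beta<\gamma\le1$, let $m\ge0$ be an integer and let $\theta=(k_r)$ be a lacunary sequence. Then $S_\theta^\beta(F,\Delta^m)\subset S_\theta^\gamma(F,\Delta^m)$, and the inclusion is strict.
   Context: A fuzzy number is a map $X:\mathbb{R}\to[0,1]$ which is normal, fuzzy convex, upper semicontinuous, with compact closure of $\{t:X(t)>0\}$; $L(\mathbb{R})$ is the set of fuzzy numbers. Level sets $[X]^\alpha=\{t:X(t)\ge\alpha\}$ ($\alpha\in(0,1]$), $[X]^0=\overline{\{t:X(t)>0\}}$, are compact intervals $[u^\alpha,v^\alpha]$. Subtraction: $[X-Y]^\alpha=[u_1^\alpha-v_2^\alpha,v_1^\alpha-u_2^\alpha]$ where $[X]^\alpha=[u_1^\alpha,v_1^\alpha]$, $[Y]^\alpha=[u_2^\alpha,v_2^\alpha]$. Metric: $d(X,Y)=\sup_{\alpha\in[0,1]}\max\{|u_1^\alpha-u_2^\alpha|,|v_1^\alpha-v_2^\alpha|\}$. For a sequence $X=(X_k)$ in $L(\mathbb{R})$: $(\Delta^0X)_k=X_k$, $(\Delta^1X)_k=X_k-X_{k+1}$, $(\Delta^mX)_k=(\Delta^1(\Delta^{m-1}X))_k$; write $\Delta^mX_k$. A lacunary sequence is an increasing integer sequence $\theta=(k_r)_{r\ge0}$ with $k_0=0$, $h_r=k_r-k_{r-1}\to\infty$; $I_r=(k_{r-1},k_r]$. For $\beta\in(0,1]$, $S_\theta^\beta(F,\Delta^m)$ is the set of sequences $X$ of fuzzy numbers for which there is $X_0\in L(\mathbb{R})$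 with $\lim_{r\to\infty}\frac{1}{h_r^\beta}|\{k\in I_r:d(\Delta^mX_k,X_0)\ge\varepsilon\}|=0$ for every $\varepsilon>0$. *)

From HB Require Import structures.
From mathcomp Require Import all_boot all_order all_algebra.
From mathcomp Require Import all_classical all_reals all_analysis.
Set Implicit Arguments. Unset Strict Implicit. Unset Printing Implicit Defensive.
Import Order.TTheory GRing.Theory Num.Theory.
Import numFieldNormedType.Exports.
Local Open Scope classical_set_scope.
Local Open Scope ring_scope.

Section Fuzzy.
Variable R : realType.

Definition level (X : R -> R) (a : R) : set R :=
  if a == 0 then closure [set t | 0 < X t] else [set t | a <= X t].

Definition lower (X : R -> R) (a : R) : R := inf (level X a).
Definition upper (X : R -> R) (a : R) : R := sup (level X a).

Definition is_fuzzy (X : R -> R) : Prop :=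
  [/\ (forall t, 0 <= X t <= 1),
      (exists t, X t = 1),
      (forall s t l, 0 <= l <= 1 -> Num.min (X s) (X t) <= X (l * s + (1 - l) * t)),
      (forall t e, 0 < e -> \forall s \near t, X s < X t + e)
    & compact (closure [set t | 0 < X t])].

(* X - Y : the fuzzy number whose a-level set is
   [u1^a - v2^a, v1^a - u2^a]; its membership function is recovered as
   t |-> sup of the levels a in (0,1] whose level set contains t (0 if none) *)
Definition fsub (X Y : R -> R) : R -> R := fun t =>
  sup ([set a | 0 < a <= 1 /\ lower X a - upper Y a <= t <= upper X a - lower Y a]
       `|` [set 0]).

Fixpoint delta (m : nat) (X : nat -> R -> R) : nat -> R -> R :=
  match m with
  | 0 => X
  | m'.+1 => fun k => fsub (delta m' X k) (delta m' X k.+1)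
  end.

Definition fdist (X Y : R -> R) : R :=
  sup [set Num.max `|lower X a - lower Y a| `|upper X a - upper Y a| | a in `[0, 1]].

End Fuzzy.

Definition lacunary (theta : nat -> nat) : Prop :=
  [/\ theta 0 = 0%N,
      (forall r, (theta r < theta r.+1)%N)
    & (forall M : nat, exists N : nat, forall r, (N <= r)%N -> (M <= theta r.+1 - theta r)%N)].

Definition hr (theta : nat -> nat) (r : nat) : nat := (theta r - theta r.-1)%N.

Definition bad_count (R : realType) (theta : nat -> nat) (m : nat)
    (X : nat -> R -> R) (X0 : R -> R) (eps : R) (r : nat) : nat :=
  count (fun k => eps <= fdist (delta m X k) X0)
        (index_iota (theta r.-1).+1 (theta r).+1).

Definition S_theta (R : realType) (beta : R) (m : nat) (theta : nat -> nat)
  : set (nat -> R -> R) :=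
  [set X | (forall k, is_fuzzy (X k)) /\
     exists X0, is_fuzzy X0 /\
       forall eps : R, 0 < eps ->
         (fun r => (bad_count theta m X X0 eps r)%:R / ((hr theta r)%:R `^ beta))
           @ \oo --> (0 : R)].

(* Since h_r >= 1 eventually, h_r^beta <= h_r^gamma, which gives the inclusion.
   For strictness use crisp numbers: Delta^m of a crisp sequence is the crisp sequence of
   m-th differences, and summation inverts differences, so every 0/1 sequence y is
   Delta^m X for some crisp X.  Let y_k = 1 exactly on the first
   n_r = min(h_r/2, floor(h_r^beta) + 1) indices of each block I_r.  Against X_0 = 0 at most
   n_r <= 2 h_r^beta indices of I_r are bad, which is o(h_r^gamma).  But every fuzzy X_0 is
   at distance >= 1/2 from the crisp 0 or the crisp 1, so for eps = 1/2 at least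
   min(n_r, h_r - n_r) >= h_r^beta / 4 indices of I_r are bad. *)

From mathcomp Require Import all_boot all_order all_algebra.
From mathcomp Require Import all_classical all_reals all_analysis.
From mathcomp Require Import lra zify.
Import Order.TTheory GRing.Theory Num.Theory.
Import numFieldNormedType.Exports.
Set Implicit Arguments. Unset Strict Implicit. Unset Printing Implicit Defensive.
Local Open Scope classical_set_scope.
Local Open Scope ring_scope.

Section CrispNumbers.
Variable R : realType.

Definition crisp (c : R) : R -> R := fun t => if t == c then 1 else 0.

Lemma crisp_ge0 c t : 0 <= crisp c t.
Proof. by rewrite /crisp; case: ifP. Qed.

Lemma crisp_le1 c t : crisp c t <= 1.
Proof. by rewrite /crisp; case: ifP. Qed.

Lemma closed_set1R (c : R) : closed [set c].
Proof. exact/accessible_closed_set1/hausdorff_accessible/Rhausdorff. Qed.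

Lemma crisp_support c : [set t | 0 < crisp c t] = [set c].
Proof.
apply/seteqP; split => t /=; rewrite /crisp; last by move=> ->; rewrite eqxx.
by case: eqP => // _; rewrite ltxx.
Qed.

Lemma closure_crisp_support c : closure [set t | 0 < crisp c t] = [set c].
Proof. by rewrite crisp_support -(closure_id _).1 ?closed_set1R. Qed.

Lemma level_crisp c a : 0 <= a <= 1 -> level (crisp c) a = [set c].
Proof.
move=> /andP[a_ge0 a_le1]; rewrite /level; case: eqP => [_|/eqP a_neq0].
  exact: closure_crisp_support.
apply/seteqP; split => t /=; rewrite /crisp; last by move=> ->; rewrite eqxx.
case: eqP => // _ a_le0.
by move: a_neq0; rewrite eq_le a_le0 a_ge0.
Qed.

Lemma lower_crisp c a : 0 <= a <= 1 -> lower (crisp c) a = c.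
Proof. by move=> a01; rewrite /lower level_crisp // inf1. Qed.

Lemma upper_crisp c a : 0 <= a <= 1 -> upper (crisp c) a = c.
Proof. by move=> a01; rewrite /upper level_crisp // sup1. Qed.

Lemma fsub_crisp c d : fsub (crisp c) (crisp d) = crisp (c - d).
Proof.
apply/funext => t; rewrite /fsub.
set S := (X in sup X).
have S_ub1 : ubound S 1 by move=> x [[/andP[_ ->] _]|->].
have S_ub : has_ubound S by exists 1.
have S0 : S 0 by right.
rewrite /crisp; case: eqP => [tE|/eqP t_neq].
  apply/le_anti/andP; split; first by apply: ge_sup => //; exists 0.
  apply: (ub_le_sup S_ub); left; split; first by rewrite ltr01 lexx.
  by rewrite !lower_crisp ?upper_crisp ?ler01 ?lexx // tE lexx.
apply/le_anti/andP; split; last exact: (ub_le_sup S_ub).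
apply: ge_sup; first by exists 0.
move=> x [[/andP[x_gt0 x_le1]]|->//].
have x01 : 0 <= x <= 1 by rewrite (ltW x_gt0) x_le1.
rewrite !lower_crisp // !upper_crisp // -eq_le => /eqP tE.
by rewrite tE eqxx in t_neq.
Qed.

Lemma is_fuzzy_crisp c : is_fuzzy (crisp c).
Proof.
split.
- by move=> t; rewrite crisp_ge0 crisp_le1.
- by exists c; rewrite /crisp eqxx.
- move=> s t l _.
  have [->|s_neq] := eqVneq s c; last by rewrite ge_min [crisp c s]/crisp (negbTE s_neq) crisp_ge0.
  have [->|t_neq] := eqVneq t c; last by rewrite ge_min [crisp c t]/crisp (negbTE t_neq) crisp_ge0 orbT.
  by rewrite -mulrDl subrKC mul1r minxx.
- move=> t e e_gt0; have [->|t_neq] := eqVneq t c.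
    by apply: filterE => s; rewrite {2}/crisp eqxx (le_lt_trans (crisp_le1 _ _)) ?ltrDl.
  have : nbhs t (~` [set c]).
    by apply: open_nbhs_nbhs; split; [rewrite openC; exact: closed_set1R | exact/eqP].
  apply: filterS => s s_neq; rewrite /crisp (negbTE t_neq) add0r.
  by case: eqP => // /s_neq.
- by rewrite closure_crisp_support; exact: compact_set1.
Qed.

Lemma fdistxx (X : R -> R) : fdist X X = 0.
Proof.
rewrite /fdist.
suff -> : [set Num.max `|lower X a - lower X a| `|upper X a - upper X a| | a in `[0, 1]]
  = [set 0] by rewrite sup1.
apply/seteqP; split => [x [a _ <-]|x ->] /=; first by rewrite !subrr normr0 maxxx.
by exists 0; rewrite ?subrr ?normr0 ?maxxx //= in_itv /= lexx ler01.
Qed.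

Lemma norm_sup_inf_le (E : set R) M : E !=set0 -> (forall x, E x -> `|x| <= M) ->
  `|inf E| <= M /\ `|sup E| <= M.
Proof.
move=> [e Ee] EM; have := EM _ Ee; rewrite ler_norml => /andP[Me eM].
have E_ub : ubound E M by move=> x /EM; rewrite ler_norml => /andP[].
have E_lb : lbound E (- M) by move=> x /EM; rewrite ler_norml => /andP[].
split; rewrite ler_norml; apply/andP; split.
- by apply: lb_le_inf => //; exists e.
- by rewrite (le_trans _ eM) //; apply: ge_inf => //; exists (- M).
- by rewrite (le_trans Me) //; apply: ub_le_sup => //; exists M.
- by apply: ge_sup => //; exists e.
Qed.

Lemma fuzzy_level_bounded (X : R -> R) : is_fuzzy X -> exists M,
  forall a, 0 <= a <= 1 -> `|lower X a| <= M /\ `|upper X a| <= M.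
Proof.
case=> _ [t1 Xt1] _ _ /compact_bounded [M0 [_ /(_ (M0 + 1))]].
rewrite ltrDl ltr01 => /(_ isT) supp_bnd; exists (M0 + 1) => a /andP[a_ge0 a_le1].
have level_sub : level X a `<=` closure [set t | 0 < X t].
  rewrite /level; case: eqP => [_ //|/eqP a_neq0] t /= aX.
  by apply: subset_closure; rewrite /= (lt_le_trans _ aX) // lt_neqAle eq_sym a_neq0.
have level_ne : level X a !=set0.
  exists t1; rewrite /level; case: eqP => _ /=; last by rewrite Xt1.
  by apply: subset_closure; rewrite /= Xt1 ltr01.
exact: norm_sup_inf_le level_ne (fun x Ex => supp_bnd x (level_sub x Ex)).
Qed.

Lemma fdist_crisp_ge c (X : R -> R) : is_fuzzy X -> `|c - lower X 1| <= fdist (crisp c) X.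
Proof.
move=> /fuzzy_level_bounded [M XM].
have dist_ub : has_ubound [set Num.max `|lower (crisp c) a - lower X a|
    `|upper (crisp c) a - upper X a| | a in `[0, 1]].
  exists (`|c| + M) => x [a]; rewrite /= in_itv /= => a01 <-.
  rewrite lower_crisp // upper_crisp //; have [lowM upM] := XM a a01.
  by rewrite ge_max !(le_trans (ler_normB _ _)) ?lerD2l.
have one01 : 0 <= (1 : R) <= 1 by rewrite ler01 lexx.
apply: (@le_trans _ _ (Num.max `|lower (crisp c) 1 - lower X 1|
    `|upper (crisp c) 1 - upper X 1|)); first by rewrite lower_crisp // le_max lexx.
by apply: ub_le_sup => //; exists 1; rewrite //= in_itv.
Qed.

Lemma fdist_crisp_far c d (X : R -> R) : is_fuzzy X ->
  `|c - d| / 2 <= fdist (crisp c) X \/ `|c - d| / 2 <= fdist (crisp d) X.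
Proof.
move=> fuzzyX; have c_le := fdist_crisp_ge c fuzzyX; have d_le := fdist_crisp_ge d fuzzyX.
have := ler_normB (c - lower X 1) (d - lower X 1).
rewrite opprB addrA subrK.
by case: (leP (`|c - d| / 2) (fdist (crisp c) X)) => ?; [left | right; lra].
Qed.

End CrispNumbers.

Section SeqDiff.
Variable V : zmodType.

Definition seq_diff (x : nat -> V) k := x k - x k.+1.

Definition seq_antidiff (y : nat -> V) k := - \sum_(j < k) y j.

Lemma seq_antidiffK : cancel seq_antidiff seq_diff.
Proof.
move=> y; apply/funext => k.
by rewrite /seq_diff /seq_antidiff big_ord_recr /= opprK addrA addNr add0r.
Qed.

Lemma iter_seq_antidiffK m : cancel (iter m seq_antidiff) (iter m seq_diff).
Proof. by elim: m => [//|m IH] y; rewrite iterSr iterS seq_antidiffK IH. Qed.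

End SeqDiff.

Lemma delta_crisp (R : realType) m (x : nat -> R) k :
  delta m (fun k => crisp (x k)) k = crisp (iter m (@seq_diff R) x k).
Proof. by elim: m k => [//|m IH] k /=; rewrite !IH fsub_crisp. Qed.

Section Blocks.
Local Open Scope nat_scope.

Lemma count_iota_ltn b s l : count (fun k => k < b) (iota s l) = minn (b - s) l.
Proof. by elim: l s => [|l IH] s /=; [rewrite minn0 | rewrite IH; case: ltnP; lia]. Qed.

Variable theta : nat -> nat.
Hypothesis theta_incr : forall r, theta r < theta r.+1.

Lemma theta_leq : {mono theta : i j / i <= j}.
Proof. exact/leq_mono/(homo_ltn ltn_trans theta_incr). Qed.

Lemma mem_block_uniq r r' k : 0 < r -> 0 < r' ->
  theta r.-1 < k <= theta r -> theta r'.-1 < k <= theta r' -> r = r'.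
Proof.
move=> r_gt0 r'_gt0 /andP[lo hi] /andP[lo' hi'].
have := theta_leq r r'.-1; have := theta_leq r' r.-1; lia.
Qed.

Variable n : nat -> nat.
Hypothesis n_le_hr : forall r, n r <= hr theta r.

Definition block_head k : bool := `[< exists r, theta r.-1 < k <= theta r.-1 + n r >].

Lemma block_headE r k : 0 < r -> theta r.-1 < k <= theta r ->
  block_head k = (k <= theta r.-1 + n r).
Proof.
move=> r_gt0 k_in; apply/asboolP/idP => [[r' k_in']|k_le]; last first.
  by exists r; move: k_in => /andP[-> _].
have r'_gt0 : 0 < r' by case: r' k_in' (n_le_hr r') => //=; rewrite /hr subnn; lia.
have k_in'' : theta r'.-1 < k <= theta r' by have := n_le_hr r'; rewrite /hr; lia.
by rewrite (mem_block_uniq r_gt0 r'_gt0 k_in k_in''); case/andP: k_in'.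
Qed.

Lemma count_block_head r : 0 < r ->
  count block_head (index_iota (theta r.-1).+1 (theta r).+1) = n r.
Proof.
move=> r_gt0; rewrite (@eq_in_count _ _ (fun k => k < (theta r.-1 + n r).+1)); last first.
  by move=> k; rewrite mem_index_iota => k_in; rewrite (block_headE r_gt0) //; lia.
have := n_le_hr r; have := theta_leq r.-1 r.
by rewrite /hr /index_iota count_iota_ltn; lia.
Qed.

Lemma count_block_tail r : 0 < r ->
  count (predC block_head) (index_iota (theta r.-1).+1 (theta r).+1) = hr theta r - n r.
Proof.
move=> r_gt0; have := count_predC block_head (index_iota (theta r.-1).+1 (theta r).+1).
by rewrite count_block_head // /index_iota size_iota /hr; lia.
Qed.

End Blocks.

Lemma lacunary_hr_cvgn theta : lacunary theta -> hr theta @ \oo --> \oo.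
Proof.
case=> _ _ h_large; apply/cvgnyPge => M.
have [N HN] := h_large M; exists N.+1 => // [[|r]] //= Nr; exact: HN.
Qed.

Section PowRLimits.
Variable R : realType.

Lemma cvgy_powR {T} {F : set_system T} {FF : Filter F} (f : T -> R) (d : R) :
  0 < d -> f @ F --> +oo -> (fun x => f x `^ d) @ F --> +oo.
Proof.
move=> d_gt0 /cvgryPge f_oo; apply/cvgryPge => A.
have A'_ge0 : 0 <= Num.max A 0 by rewrite le_max lexx orbT.
near=> x; have le_f : Num.max A 0 `^ d^-1 <= f x by near: x; exact: f_oo.
have f_ge0 : 0 <= f x := le_trans (powR_ge0 _ _) le_f.
have := ge0_ler_powR (ltW d_gt0) (powR_ge0 _ _) f_ge0 le_f.
rewrite -powRrM mulVf ?gt_eqF // powRr1 //; apply: le_trans.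
by rewrite le_max lexx.
Unshelve. all: end_near. Qed.

Lemma cvg0_div_powR_mono (c h : nat -> nat) (beta gamma : R) :
  beta <= gamma -> h @ \oo --> \oo ->
  (fun r => (c r)%:R / (h r)%:R `^ beta) @ \oo --> 0 ->
  (fun r => (c r)%:R / (h r)%:R `^ gamma) @ \oo --> 0.
Proof.
move=> le_bg /cvgnyPge h_oo c_beta.
apply: (squeeze_cvgr _ (cvg_cst 0) c_beta); near=> r.
have h_ge1 : (1 <= h r)%N by near: r; exact: h_oo.
rewrite divr_ge0 ?powR_ge0 //=; apply: ler_wpM2l => //.
by rewrite lef_pV2 ?posrE ?powR_gt0 ?ltr0n // ler_powR ?ler1n.
Unshelve. all: end_near. Qed.

End PowRLimits.

Section HeadSize.
Variables (R : realType) (beta : R).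

Definition head_size (h : nat) : nat := minn h./2 (Num.truncn (h%:R `^ beta)).+1.

Lemma head_size_le h : (head_size h <= h)%N.
Proof. rewrite /head_size; lia. Qed.

Hypotheses (beta_gt0 : 0 < beta) (beta_le1 : beta <= 1).

Lemma powR_nat_ge1 h : (1 <= h)%N -> 1 <= h%:R `^ beta.
Proof.
move=> h_ge1; have := @ge0_ler_powR R beta (ltW beta_gt0) 1 h%:R.
by rewrite powR1 !nnegrE ler01 ler0n ler1n; apply.
Qed.

Lemma powR_nat_le h : (1 <= h)%N -> h%:R `^ beta <= h%:R.
Proof. by move=> h_ge1; apply: ler1_powR; rewrite ?ler1n. Qed.

Lemma head_size_le_powR h : (1 <= h)%N -> (head_size h)%:R <= 2 * h%:R `^ beta.
Proof.
move=> h_ge1; have := powR_nat_ge1 h_ge1.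
have : (Num.truncn (h%:R `^ beta))%:R <= h%:R `^ beta by rewrite truncn_le powR_ge0.
have : (head_size h <= (Num.truncn (h%:R `^ beta)).+1)%N by rewrite geq_minr.
rewrite -(ler_nat R) -natr1; lra.
Qed.

Lemma powR_le_head_size h : (2 <= h)%N -> h%:R `^ beta <= 4 * (head_size h)%:R.
Proof.
move=> h_ge2; rewrite /head_size; case: leqP => [half_le | trunc_lt].
  apply: le_trans (powR_nat_le _) _; first lia.
  by rewrite -natrM ler_nat; lia.
have := ler0n R (Num.truncn (h%:R `^ beta)).+1; have := truncnS_gt (h%:R `^ beta); lra.
Qed.

Lemma powR_le_tail_size h : (1 <= h)%N -> h%:R `^ beta <= 4 * (h - head_size h)%:R.
Proof.
move=> h_ge1; apply: le_trans (powR_nat_le h_ge1) _.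
by rewrite -natrM ler_nat /head_size; lia.
Qed.

End HeadSize.

Lemma S_theta_subset (R : realType) (beta gamma : R) m theta :
  beta <= gamma -> lacunary theta -> S_theta beta m theta `<=` S_theta gamma m theta.
Proof.
move=> le_bg lac X [fuzzyX [X0 [fuzzyX0 dens]]]; split => //; exists X0; split => // eps eps_gt0.
exact: cvg0_div_powR_mono le_bg (lacunary_hr_cvgn lac) (dens eps eps_gt0).
Qed.

Section Witness.
Variables (R : realType) (beta : R) (m : nat) (theta : nat -> nat).
Hypotheses (beta_gt0 : 0 < beta) (beta_le1 : beta <= 1) (lac : lacunary theta).

Let theta_incr : forall r, (theta r < theta r.+1)%N. Proof. by case: lac. Qed.

Definition witness_head : nat -> bool :=
  block_head theta (fun r => head_size beta (hr theta r)).

Let hr_ge N : \forall r \near \oo, (N <= hr theta r)%N.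
Proof. exact: (cvgnyPge _).1 (lacunary_hr_cvgn lac) N. Qed.

Let head_size_le_hr r : (head_size beta (hr theta r) <= hr theta r)%N.
Proof. exact: head_size_le. Qed.

Definition witness : nat -> R -> R :=
  fun k => crisp (iter m (@seq_antidiff R) (fun k => if witness_head k then 1 else 0) k).

Lemma delta_witness k : delta m witness k = crisp (if witness_head k then 1 else 0).
Proof. by rewrite /witness delta_crisp iter_seq_antidiffK. Qed.

Lemma bad_count_witness_le eps r : 0 < eps -> (0 < r)%N ->
  (bad_count theta m witness (crisp 0) eps r <= head_size beta (hr theta r))%N.
Proof.
move=> eps_gt0 r_gt0; rewrite /bad_count -(count_block_head theta_incr head_size_le_hr r_gt0).
apply: sub_count => k /=; rewrite delta_witness; case: ifP => // _.
by rewrite fdistxx leNgt eps_gt0.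
Qed.

Lemma bad_count_witness_ge X0 r : is_fuzzy X0 -> (2 <= hr theta r)%N ->
  (hr theta r)%:R `^ beta <= 4 * (bad_count theta m witness X0 (1 / 2) r)%:R.
Proof.
move=> fuzzyX0 hr_ge2; have r_gt0 : (0 < r)%N by case: r hr_ge2 => //; rewrite /hr /=; lia.
have := fdist_crisp_far 1 0 fuzzyX0; rewrite subr0 normr1 => -[far1 | far0].
- have : (head_size beta (hr theta r) <= bad_count theta m witness X0 (1 / 2) r)%N.
    rewrite -(count_block_head theta_incr head_size_le_hr r_gt0).
    by apply: sub_count => k head_k; rewrite delta_witness /witness_head head_k.
  rewrite -(ler_nat R) => le_bad.
  apply: le_trans (powR_le_head_size beta_gt0 beta_le1 hr_ge2) _.
  by rewrite ler_pM2l.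
- have : (hr theta r - head_size beta (hr theta r) <= bad_count theta m witness X0 (1 / 2) r)%N.
    rewrite -(count_block_tail theta_incr head_size_le_hr r_gt0).
    by apply: sub_count => k tail_k; rewrite delta_witness /witness_head (negbTE tail_k).
  rewrite -(ler_nat R) => le_bad.
  apply: le_trans (powR_le_tail_size beta_gt0 beta_le1 (ltnW hr_ge2)) _.
  by rewrite ler_pM2l.
Qed.

Lemma witness_notin_S_theta : ~ S_theta beta m theta witness.
Proof.
case=> _ [X0 [fuzzyX0 dens]].
have half_gt0 : 0 < 1 / 2 :> R by lra.
suff : 1 / 4 <= 0 :> R by lra.
apply: cvgr_to_ge (dens _ half_gt0) _; near=> r.
have hr_ge2 : (2 <= hr theta r)%N by near: r; exact: hr_ge.
have := bad_count_witness_ge fuzzyX0 hr_ge2.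
have hr_pos : 0 < (hr theta r)%:R `^ beta by rewrite powR_gt0 // ltr0n; lia.
by rewrite ler_pdivlMr //; lra.
Unshelve. all: end_near. Qed.

Lemma witness_in_S_theta gamma : beta < gamma -> S_theta gamma m theta witness.
Proof.
move=> lt_bg; split; first by move=> k; exact: is_fuzzy_crisp.
exists (crisp 0); split; first exact: is_fuzzy_crisp.
move=> eps eps_gt0; pose d := gamma - beta; have d_gt0 : 0 < d by rewrite subr_gt0.
have hrd_cvg0 : (fun r => ((hr theta r)%:R `^ d)^-1) @ \oo --> 0.
  apply/gtr0_cvgV0.
    by near=> r; rewrite powR_gt0 // ltr0n; near: r; exact: hr_ge.
  by apply: cvgy_powR => //; apply/cvgrnyP/lacunary_hr_cvgn.
have := cvgMl_tmp (a := 2) hrd_cvg0; rewrite mulr0 => /(_ _) bound_cvg0.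
apply: (squeeze_cvgr _ (cvg_cst 0) bound_cvg0); near=> r.
have hr_ge1 : (1 <= hr theta r)%N by near: r; exact: hr_ge.
have r_gt0 : (0 < r)%N by near: r; exact: nbhs_infty_gt.
have hr_pos x : 0 < (hr theta r)%:R `^ x by rewrite powR_gt0 // ltr0n.
have gammaE : (hr theta r)%:R `^ gamma = (hr theta r)%:R `^ beta * (hr theta r)%:R `^ d.
  by rewrite -powRD ?subrKC // pnatr_eq0 -lt0n hr_ge1 implybT.
rewrite divr_ge0 ?powR_ge0 //= gammaE invfM mulrA ler_pM2r ?invr_gt0 ?hr_pos //.
rewrite ler_pdivrMr ?hr_pos //; apply: le_trans (head_size_le_powR beta_gt0 hr_ge1).
by rewrite ler_nat bad_count_witness_le.
Unshelve. all: end_near. Qed.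

End Witness.

Unset Implicit Arguments.
Theorem theorem2p5 (R : realType) (beta gamma : R) (m : nat) (theta : nat -> nat) :
  0 < beta -> beta < gamma -> gamma <= 1 -> lacunary theta ->
  S_theta beta m theta `<=` S_theta gamma m theta /\
  exists X, S_theta gamma m theta X /\ ~ S_theta beta m theta X.
Proof.
move=> beta_gt0 lt_bg gamma_le1 lac; split; first exact: S_theta_subset (ltW lt_bg) lac.
have beta_le1 : beta <= 1 := le_trans (ltW lt_bg) gamma_le1.
exists (witness beta m theta); split; first exact: witness_in_S_theta.
exact: witness_notin_S_theta.
Qed.
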